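(* There is a constant $c>0$ such that for every $\alpha\in(0,\tfrac12)$ there is $\nu^*(\alpha)$ with the following property: for every $\nu>\nu^*(\alpha)$, all sufficiently large $n$, every admissible pair $(i,j)$ and every $t\ge 0$, $$\mathbb P(D_{i,j}\ge t)\le e^{-ct}.$$
   Context: KPKVB setting: fix $\alpha>0$, $\nu>0$, an integer $n>\nu$, and $R=2\ln(n/\nu)$. $\mathcal D_R$ is the hyperbolic disk (curvature $-1$) of radius $R$ around the origin, with polar coordinates $(r,\theta)$, $r\in[0,R)$, $\theta\in(0,2\pi]$; $f_{\alpha,R}(r,\theta)=\frac{\alpha\sinh(\alpha r)}{2\pi(\cosh(\alpha R)-1)}$. $\mathcal P$ is a Poisson point process on $\mathcal D_R$ with intensity measure $n f_{\alpha,R}(r,\theta)\,dr\,d\theta$ (the vertex set of $G_{\mathrm{Po}}(n;\alpha,\nu)$). Tiling: $i_{\max}=\lceil 0.9R/(2\ln 2)\rceil$, $n_i=2^{4-i+\lfloor R/(2\ln 2)\rfloor}$ for integers $0\le i\le i_{\max}$; $(i,j)$ is admissible if $0\le i\le i_{\max}$, $0\le j<n_i$; $T_{i,j}=\{(r,\theta)\in\mathcal D_R:\ R-2(i+1)\ln 2\le r<R-2i\ln 2,\ 2\pi j/n_i<\theta\le 2\pi(j+1)/n_i\}$. $N(T_{i,j})=|\mathcal P\cap T_{i,j}|$. Demands: $D_{0,j}=N(T_{0,j})$ if $N(T_{0,j})\in\{1,2\}$ and $D_{0,j}=0$ otherwise; for $0<i\le i_{\max}$, $D_{i,j}=\max\{D_{i-1,2j}+D_{i-1,2j+1}+3-N(T_{i,j}),0\}$.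 *)

From Stdlib Require Import Reals Lra Lia ZArith Arith List.
Open Scope R_scope.

Definition Rad (nu : R) (n : nat) : R := 2 * ln (INR n / nu).

(** floor and ceiling (Int_part x = up x - 1 is the floor). *)
Definition Rfloor (x : R) : Z := Int_part x.
Definition Rceil (x : R) : Z := (- Int_part (- x))%Z.

Definition imax (nu : R) (n : nat) : Z :=
  Rceil (9 / 10 * Rad nu n / (2 * ln 2)).

(** n_i = 2^(4 - i + floor(R / (2 ln 2))) (a positive integer for admissible i). *)
Definition ntiles (nu : R) (n : nat) (i : nat) : nat :=
  Nat.pow 2 (Z.to_nat (4 - Z.of_nat i + Rfloor (Rad nu n / (2 * ln 2)))%Z).

Definition admissible (nu : R) (n : nat) (i j : nat) : Prop :=
  (Z.of_nat i <= imax nu n)%Z /\ (j < ntiles nu n i)%nat.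

(** Expected number of points of P in T_{i,j}:
    n * \int_{T_{i,j}} f_{alpha,R}(r,theta) dr dtheta, where the radial range
    [R - 2(i+1) ln 2, R - 2 i ln 2) is intersected with [0,R), the angular width
    is 2 pi / n_i, and \int alpha sinh(alpha r) dr = cosh(alpha r). *)
Definition tile_mean (alpha nu : R) (n : nat) (i : nat) : R :=
  let RR := Rad nu n in
  let r2 := Rmax 0 (RR - 2 * INR i * ln 2) in
  let r1 := Rmax 0 (RR - 2 * (INR i + 1) * ln 2) in
  INR n * (cosh (alpha * r2) - cosh (alpha * r1))
    / (INR (ntiles nu n i) * (cosh (alpha * RR) - 1)).

Definition pois (mu : R) (k : nat) : R := exp (- mu) * mu ^ k / INR (fact k).

(** A configuration assigns a count N i j = N(T_{i,j}) to each tile. *)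
Definition config := nat -> nat -> nat.

(** The demands D_{i,j} as a function of the tile counts
    (nat truncated subtraction = max{.,0}). *)
Fixpoint demand (N : config) (i j : nat) : nat :=
  match i with
  | O => if orb (Nat.eqb (N 0%nat j) 1) (Nat.eqb (N 0%nat j) 2) then N 0%nat j else 0%nat
  | S i' => (demand N i' (2 * j) + demand N i' (2 * j + 1) + 3 - N i j)%nat
  end.

Definition subtree (i j : nat) : list (nat * nat) :=
  flat_map (fun i' => map (fun j' => (i', j'))
                          (seq (j * Nat.pow 2 (i - i')) (Nat.pow 2 (i - i'))))
           (seq 0 (S i)).

Definition update (N : config) (a b k : nat) : config :=
  fun x y => if andb (Nat.eqb x a) (Nat.eqb y b) then k else N x y.

(** Sum over all assignments of counts in {0..K} to the listed tiles, each
    weighted by the (independent) Poisson probability with mean mu tile. *)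
Fixpoint cfg_sum (mu : nat -> nat -> R) (K : nat) (F : config -> R)
         (tiles : list (nat * nat)) (N : config) : R :=
  match tiles with
  | nil => F N
  | (a, b) :: rest =>
      sum_f_R0 (fun k => pois (mu a b) k * cfg_sum mu K F rest (update N a b k)) K
  end.

(** P(D_{i,j} >= t, and all counts in the subtree are <= K).  As K -> oo this
    increases to P(D_{i,j} >= t), since the counts N(T_{i',j'}) of the Poisson
    process in the disjoint tiles are independent Poisson variables with
    means tile_mean. *)
Definition prob_trunc (alpha nu : R) (n : nat) (i j : nat) (t : R) (K : nat) : R :=
  cfg_sum (fun a _ => tile_mean alpha nu n a) K
          (fun N => if Rle_dec t (INR (demand N i j)) then 1 else 0)
          (subtree i j) (fun _ _ => 0%nat).

Definition prob_demand_ge_le (alpha nu : R) (n : nat) (i j : nat) (t b : R) : Prop :=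
  forall K : nat, prob_trunc alpha nu n i j t K <= b.

From Stdlib Require Import Reals Lra Lia ZArith Arith List Permutation FunctionalExtensionality.
Open Scope R_scope.

(* Every tile of level at most i_max has Poisson mean at least nu (1 - 2^(-2 alpha)) / 32:
   it carries a fraction about 2^(-2 alpha i) (1 - 2^(-2 alpha)) of the radial mass and a
   fraction 1 / n_i, about 2^i nu / (16 n), of the angle.  For nu large this is >= 12, and
   a Poisson variable N of mean m >= 12 has E e^(-N) = e^(-m (1 - 1/e)) <= e^(-6).
   Pointwise e^(D_(i+1,j)) <= e^3 e^(D_(i,2j)) e^(D_(i,2j+1)) e^(-N(T_(i+1,j))), the three
   factors depending on disjoint sets of tiles, so by induction on i
   E [e^(D_(i,j)) - 1] <= e^3 e^(-6) (3/2)^2 <= 1/2.  Markov's inequality then gives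
   P (D_(i,j) >= t) <= 2 e^(-t) E [e^(D_(i,j)) - 1] <= e^(-t), i.e. c = 1.  Truncating the
   counts at K only lowers every sum, so all bounds hold for prob_trunc. *)

Lemma exp_le x y : x <= y -> exp x <= exp y.
Proof. intros [H | ->]; [left; now apply exp_increasing | apply Rle_refl]. Qed.

Lemma exp_neg1_le_half : exp (-1) <= 1 / 2.
Proof.
  assert (H1 : 2 <= exp 1) by (pose proof (exp_ineq1_le 1); lra).
  assert (E : exp (-1) * exp 1 = 1)
    by (rewrite <- exp_plus; replace (-1 + 1) with 0 by ring; apply exp_0).
  pose proof (exp_pos (-1)). nra.
Qed.

Lemma exp_pow x k : exp x ^ k = exp (INR k * x).
Proof. rewrite <- Rpower_pow by apply exp_pos. unfold Rpower. now rewrite ln_exp. Qed.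

Lemma exp_neg_nat_le k : exp (- INR k) <= (1 / 2) ^ k.
Proof.
  replace (- INR k) with (INR k * -1) by ring. rewrite <- exp_pow.
  apply pow_incr. split; [left; apply exp_pos | apply exp_neg1_le_half].
Qed.

Lemma pois_nonneg mu k : 0 <= mu -> 0 <= pois mu k.
Proof.
  intro Hmu. unfold pois, Rdiv. repeat apply Rmult_le_pos.
  - left; apply exp_pos.
  - now apply pow_le.
  - left; apply Rinv_0_lt_compat, INR_fact_lt_0.
Qed.

Lemma exp_partial_sum_le y K : 0 <= y ->
  sum_f_R0 (fun k => / INR (fact k) * y ^ k) K <= exp y.
Proof.
  intro Hy.
  apply (growing_ineq (fun n => sum_f_R0 (fun k => / INR (fact k) * y ^ k) n)).
  - intro n. cbv beta. rewrite tech5.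
    assert (0 <= / INR (fact (S n)) * y ^ S n); [|lra].
    apply Rmult_le_pos; [left; apply Rinv_0_lt_compat, INR_fact_lt_0 | now apply pow_le].
  - exact (proj2_sig (exist_exp y)).
Qed.

Lemma pois_gen_fun_le mu a K : 0 <= mu -> 0 <= a ->
  sum_f_R0 (fun k => pois mu k * a ^ k) K <= exp (mu * (a - 1)).
Proof.
  intros Hmu Ha.
  replace (mu * (a - 1)) with (- mu + mu * a) by ring. rewrite exp_plus.
  rewrite (sum_eq _ (fun k => / INR (fact k) * (mu * a) ^ k * exp (- mu))).
  - rewrite <- scal_sum. apply Rmult_le_compat_l; [left; apply exp_pos|].
    apply exp_partial_sum_le. now apply Rmult_le_pos.
  - intros k _. unfold pois, Rdiv. rewrite Rpow_mult_distr. ring.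
Qed.

Lemma pois_sum_le1 mu K : 0 <= mu -> sum_f_R0 (fun k => pois mu k) K <= 1.
Proof.
  intro Hmu. rewrite (sum_eq _ (fun k => pois mu k * 1 ^ k)) by (intros; rewrite pow1; ring).
  eapply Rle_trans; [apply (pois_gen_fun_le mu 1); lra|].
  rewrite Rminus_diag, Rmult_0_r, exp_0. apply Rle_refl.
Qed.

Lemma pois_sum_exp_decay_le m C f K : 12 <= m -> 0 <= C ->
  (forall k, f k <= C * exp (- INR k)) ->
  sum_f_R0 (fun k => pois m k * f k) K <= C * exp (-6).
Proof.
  intros Hm HC Hf.
  apply Rle_trans with (C * sum_f_R0 (fun k => pois m k * exp (- 1) ^ k) K).
  - rewrite scal_sum. apply sum_Rle; intros k _.
    rewrite exp_pow. replace (INR k * -1) with (- INR k) by ring.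
    replace (pois m k * exp (- INR k) * C) with (pois m k * (C * exp (- INR k))) by ring.
    apply Rmult_le_compat_l; [apply pois_nonneg; lra | apply Hf].
  - apply Rmult_le_compat_l; [exact HC|].
    eapply Rle_trans; [apply pois_gen_fun_le; [lra | left; apply exp_pos]|].
    apply exp_le. pose proof exp_neg1_le_half. nra.
Qed.

Definition means_nonneg (mu : nat -> nat -> R) (L : list (nat * nat)) : Prop :=
  forall a b, In (a, b) L -> 0 <= mu a b.

Lemma update_comm N a b c d k k' : (a, b) <> (c, d) ->
  update (update N a b k) c d k' = update (update N c d k') a b k.
Proof.
  intro Hne. apply functional_extensionality; intro x; apply functional_extensionality; intro y.
  unfold update.
  destruct (Nat.eqb_spec x c), (Nat.eqb_spec y d), (Nat.eqb_spec x a), (Nat.eqb_spec y b);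
    simpl; subst; congruence.
Qed.

Lemma update_same N a b k : update N a b k a b = k.
Proof. unfold update. now rewrite !Nat.eqb_refl. Qed.

Lemma sum_f_R0_swap (f : nat -> nat -> R) K1 K2 :
  sum_f_R0 (fun k => sum_f_R0 (fun k' => f k k') K2) K1 =
  sum_f_R0 (fun k' => sum_f_R0 (fun k => f k k') K1) K2.
Proof.
  induction K1 as [|K1 IH]; simpl.
  - now apply sum_eq.
  - rewrite IH, <- plus_sum. now apply sum_eq.
Qed.

Section ConfigSums.

Variables (mu : nat -> nat -> R) (K : nat).

Lemma means_nonneg_cons a b L :
  means_nonneg mu ((a, b) :: L) -> 0 <= mu a b /\ means_nonneg mu L.
Proof. intro H. split; [apply H; now left | intros a' b' Hin; apply H; now right]. Qed.

Lemma cfg_sum_app F L1 L2 N :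
  cfg_sum mu K F (L1 ++ L2) N = cfg_sum mu K (cfg_sum mu K F L2) L1 N.
Proof.
  revert N; induction L1 as [|[a b] L1 IH]; intro N; simpl; [reflexivity|].
  apply sum_eq; intros; now rewrite IH.
Qed.

Lemma cfg_sum_perm L L' : Permutation L L' -> forall F N,
  cfg_sum mu K F L N = cfg_sum mu K F L' N.
Proof.
  induction 1 as [|[a b] L L' _ IH|[a b] [c d] L|L L' L'' _ IH1 _ IH2]; intros F N; simpl.
  - reflexivity.
  - apply sum_eq; intros; now rewrite IH.
  - assert (Hdec : {(a, b) = (c, d)} + {(a, b) <> (c, d)}) by repeat decide equality.
    destruct Hdec as [E | Hne].
    { injection E as -> ->. reflexivity. }
    transitivity (sum_f_R0 (fun k => sum_f_R0 (fun k' => pois (mu c d) k *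
        (pois (mu a b) k' * cfg_sum mu K F L (update (update N c d k) a b k'))) K) K).
    + apply sum_eq; intros k _. rewrite scal_sum. apply sum_eq; intros; ring.
    + rewrite sum_f_R0_swap. apply sum_eq; intros k' _. rewrite scal_sum.
      apply sum_eq; intros k _. rewrite update_comm by congruence. ring.
  - now rewrite IH1, IH2.
Qed.

Lemma cfg_sum_add F G L N :
  cfg_sum mu K (fun N => F N + G N) L N = cfg_sum mu K F L N + cfg_sum mu K G L N.
Proof.
  revert N; induction L as [|[a b] L IH]; intro N; simpl; [reflexivity|].
  rewrite <- plus_sum. apply sum_eq; intros; rewrite IH; ring.
Qed.

Lemma cfg_sum_scal H G L N :
  (forall a b k N, In (a, b) L -> H (update N a b k) = H N) ->
  cfg_sum mu K (fun N => H N * G N) L N = H N * cfg_sum mu K G L N.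
Proof.
  intro HH; revert N; induction L as [|[a b] L IH]; intro N; simpl; [reflexivity|].
  rewrite scal_sum. apply sum_eq; intros k _.
  rewrite IH by (intros; apply HH; now right).
  rewrite HH by now left. ring.
Qed.

Lemma cfg_sum_le F G L N : means_nonneg mu L -> (forall N, F N <= G N) ->
  cfg_sum mu K F L N <= cfg_sum mu K G L N.
Proof.
  intros Hmu HFG; revert N; induction L as [|[a b] L IH]; intro N; simpl; [apply HFG|].
  apply means_nonneg_cons in Hmu as [Hab Hmu].
  apply sum_Rle; intros k _. apply Rmult_le_compat_l; [now apply pois_nonneg | now apply IH].
Qed.

(* Truncating the counts at K loses mass, so constants are only bounded from above. *)
Lemma cfg_sum_const_le c L N : means_nonneg mu L -> 0 <= c ->
  cfg_sum mu K (fun _ => c) L N <= c.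
Proof.
  intros Hmu Hc; revert N; induction L as [|[a b] L IH]; intro N; simpl; [lra|].
  apply means_nonneg_cons in Hmu as [Hab Hmu].
  apply Rle_trans with (sum_f_R0 (fun k => pois (mu a b) k * c) K).
  - apply sum_Rle; intros k _. apply Rmult_le_compat_l; [now apply pois_nonneg | now apply IH].
  - rewrite <- scal_sum, Rmult_comm.
    rewrite <- (Rmult_1_l c) at 2. apply Rmult_le_compat_r; [exact Hc|].
    now apply pois_sum_le1.
Qed.

Lemma cfg_sum_le_one_plus F L N c : means_nonneg mu L ->
  cfg_sum mu K (fun N => F N - 1) L N <= c -> cfg_sum mu K F L N <= 1 + c.
Proof.
  intros Hmu H.
  replace F with (fun N => 1 + (F N - 1)) by (apply functional_extensionality; intro; ring).
  rewrite cfg_sum_add. pose proof (cfg_sum_const_le 1 L N Hmu ltac:(lra)). lra.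
Qed.

End ConfigSums.

Lemma in_subtree i j a b : In (a, b) (subtree i j) <->
  (a <= i /\ j * 2 ^ (i - a) <= b < (j + 1) * 2 ^ (i - a))%nat.
Proof.
  unfold subtree. rewrite in_flat_map. split.
  - intros [x [Hx Hin]]. apply in_seq in Hx. apply in_map_iff in Hin.
    destruct Hin as [y [Hy Hy']]. injection Hy as <- <-. apply in_seq in Hy'. lia.
  - intros [Ha Hb]. exists a; split; [apply in_seq; lia|].
    apply in_map_iff. exists b; split; [reflexivity | apply in_seq; lia].
Qed.

Lemma subtree_0 j : subtree 0 j = (0%nat, j) :: nil.
Proof. unfold subtree. simpl. now rewrite Nat.mul_1_r. Qed.

Lemma subtree_child i j c a b : (c < 2)%nat ->
  In (a, b) (subtree i (2 * j + c)) -> In (a, b) (subtree (S i) j).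
Proof.
  intros Hc. rewrite !in_subtree. intros [Ha Hb].
  replace (S i - a)%nat with (S (i - a)) by lia. rewrite Nat.pow_succ_r'. nia.
Qed.

Lemma subtree_children_disjoint i j a b :
  In (a, b) (subtree i (2 * j)) -> ~ In (a, b) (subtree i (2 * j + 1)).
Proof. rewrite !in_subtree. nia. Qed.

Lemma root_notin_subtree i j c : ~ In (S i, j) (subtree i c).
Proof. rewrite in_subtree. lia. Qed.

Lemma flat_map_app_perm {A B} (f g : A -> list B) l :
  Permutation (flat_map (fun x => f x ++ g x) l) (flat_map f l ++ flat_map g l).
Proof.
  induction l as [|x l IH]; cbn [flat_map]; [reflexivity|].
  rewrite <- !app_assoc. apply Permutation_app_head.
  eapply Permutation_trans; [apply Permutation_app_head, IH | apply Permutation_app_swap_app].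
Qed.

Definition subtree_row (i j x : nat) : list (nat * nat) :=
  map (fun j' => (x, j')) (seq (j * 2 ^ (i - x)) (2 ^ (i - x))).

Lemma subtree_row_S i j x : (x <= i)%nat ->
  subtree_row (S i) j x = subtree_row i (2 * j) x ++ subtree_row i (2 * j + 1) x.
Proof.
  intro Hx. unfold subtree_row.
  replace (S i - x)%nat with (S (i - x)) by lia. rewrite Nat.pow_succ_r'.
  replace (2 * 2 ^ (i - x))%nat with (2 ^ (i - x) + 2 ^ (i - x))%nat by lia.
  rewrite seq_app, map_app. f_equal; do 2 f_equal; lia.
Qed.

Lemma subtree_S_perm i j : Permutation (subtree (S i) j)
  (subtree i (2 * j) ++ subtree i (2 * j + 1) ++ (S i, j) :: nil).
Proof.
  change (subtree (S i) j) with (flat_map (subtree_row (S i) j) (seq 0 (S (S i)))).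
  rewrite seq_S, flat_map_app, app_assoc. apply Permutation_app.
  - rewrite flat_map_concat_map.
    rewrite (map_ext_in _ (fun x => subtree_row i (2 * j) x ++ subtree_row i (2 * j + 1) x))
      by (intros x Hx; apply in_seq in Hx; apply subtree_row_S; lia).
    rewrite <- flat_map_concat_map. apply flat_map_app_perm.
  - unfold subtree_row. simpl. now rewrite Nat.sub_diag, Nat.mul_1_r.
Qed.

Lemma demand_local i : forall j N N',
  (forall a b, In (a, b) (subtree i j) -> N a b = N' a b) -> demand N i j = demand N' i j.
Proof.
  induction i as [|i IH]; intros j N N' H; cbn [demand].
  - rewrite (H 0%nat j) by (rewrite subtree_0; now left). reflexivity.
  - rewrite (IH (2 * j)%nat N N'), (IH (2 * j + 1)%nat N N'), (H (S i) j); [reflexivity| | |].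
    + apply in_subtree. rewrite Nat.sub_diag. simpl. lia.
    + intros a b Hin. apply H, (subtree_child i j 1); [lia | exact Hin].
    + intros a b Hin. apply H, (subtree_child i j 0); [lia | now rewrite Nat.add_0_r].
Qed.

Lemma demand_update i j N a b k : ~ In (a, b) (subtree i j) ->
  demand (update N a b k) i j = demand N i j.
Proof.
  intro Hn. apply demand_local. intros a' b' Hin. unfold update.
  destruct (Nat.eqb_spec a' a), (Nat.eqb_spec b' b); subst; simpl; tauto.
Qed.

Lemma exp_demand_0_le N j k :
  exp (INR (demand (update N 0 j k) 0 j)) - 1 <= exp 4 * exp (- INR k).
Proof.
  cbn [demand]. rewrite update_same, <- exp_plus.
  destruct (Nat.eqb_spec k 1) as [-> | _]; [|destruct (Nat.eqb_spec k 2) as [-> | _]];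
    simpl orb; cbv iota.
  - assert (exp (INR 1) <= exp (4 + - INR 1)) by (apply exp_le; simpl; lra). lra.
  - assert (exp (INR 2) <= exp (4 + - INR 2)) by (apply exp_le; simpl; lra). lra.
  - simpl INR. rewrite exp_0. pose proof (exp_pos (4 + - INR k)). lra.
Qed.

Lemma exp_demand_S_le N i j k :
  exp (INR (demand (update N (S i) j k) (S i) j)) - 1 <=
  exp (3 + INR (demand N i (2 * j)) + INR (demand N i (2 * j + 1))) * exp (- INR k).
Proof.
  cbn [demand]. rewrite update_same, !demand_update by apply root_notin_subtree.
  rewrite <- exp_plus.
  set (dA := demand N i (2 * j)). set (dB := demand N i (2 * j + 1)).
  pose proof (exp_pos (3 + INR dA + INR dB + - INR k)).
  destruct (Nat.le_gt_cases (dA + dB + 3) k).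
  - replace (dA + dB + 3 - k)%nat with 0%nat by lia. simpl INR. rewrite exp_0. lra.
  - rewrite minus_INR, !plus_INR by lia. simpl INR.
    assert (exp (INR dA + INR dB + (1 + 1 + 1) - INR k) <= exp (3 + INR dA + INR dB + - INR k))
      by (apply exp_le; lra).
    lra.
Qed.

(* For an integer d >= t > 0 we have d >= 1, hence exp d <= 2 (exp d - 1). *)
Lemma indicator_le_exp_moment t d : 0 < t ->
  (if Rle_dec t (INR d) then 1 else 0) <= 2 * exp (- t) * (exp (INR d) - 1).
Proof.
  intro Ht. pose proof (exp_pos (- t)). pose proof (exp_ineq1_le (INR d)).
  destruct (Rle_dec t (INR d)) as [Htd | _]; [|pose proof (pos_INR d); nra].
  assert (Hd : 1 <= INR d).
  { destruct d as [|d]; [simpl in Htd; lra | rewrite S_INR; pose proof (pos_INR d); lra]. }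
  assert (H2 : 2 <= exp (INR d)) by lra.
  assert (Hmarkov : 1 <= exp (- t) * exp (INR d))
    by (rewrite <- exp_plus, <- exp_0; apply exp_le; lra).
  nra.
Qed.

Section DemandMoment.

Variables (mu : nat -> nat -> R) (K I : nat).
Hypothesis mu_ge12 : forall a b, (a <= I)%nat -> 12 <= mu a b.

Lemma means_nonneg_subtree i j : (i <= I)%nat -> means_nonneg mu (subtree i j).
Proof.
  intros Hi a b Hin. apply in_subtree in Hin.
  pose proof (mu_ge12 a b ltac:(lia)). lra.
Qed.

Lemma root_exp_moment_le i j N : (S i <= I)%nat ->
  cfg_sum mu K (fun N => exp (INR (demand N (S i) j)) - 1) ((S i, j) :: nil) N <=
  exp (-3) * exp (INR (demand N i (2 * j))) * exp (INR (demand N i (2 * j + 1))).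
Proof.
  intro Hi. simpl cfg_sum.
  eapply Rle_trans.
  - apply pois_sum_exp_decay_le; [now apply mu_ge12 | left; apply exp_pos |].
    intro k. apply exp_demand_S_le.
  - rewrite <- !exp_plus. apply Req_le. f_equal. ring.
Qed.

Lemma demand_exp_moment_le i : (i <= I)%nat -> forall j N,
  cfg_sum mu K (fun N => exp (INR (demand N i j)) - 1) (subtree i j) N <= 1 / 2.
Proof.
  induction i as [|i IH]; intros Hi j N.
  - rewrite subtree_0. simpl cfg_sum.
    eapply Rle_trans.
    + apply pois_sum_exp_decay_le; [now apply mu_ge12 | left; apply exp_pos |].
      intro k. apply exp_demand_0_le.
    + rewrite <- exp_plus. replace (4 + -6) with (- INR 2) by (simpl; ring).
      eapply Rle_trans; [apply exp_neg_nat_le | simpl; lra].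
  - set (eA := fun N => exp (INR (demand N i (2 * j)))).
    set (eB := fun N => exp (INR (demand N i (2 * j + 1)))).
    assert (Hchild : forall c N,
      cfg_sum mu K (fun N => exp (INR (demand N i c))) (subtree i c) N <= 3 / 2).
    { intros c N'. replace (3 / 2) with (1 + 1 / 2) by field.
      apply cfg_sum_le_one_plus; [apply means_nonneg_subtree; lia | apply IH; lia]. }
    rewrite (cfg_sum_perm _ _ _ _ (subtree_S_perm i j)), !cfg_sum_app.
    apply Rle_trans with
      (cfg_sum mu K (fun N1 => exp (-3) * (3 / 2) * eA N1) (subtree i (2 * j)) N).
    + apply cfg_sum_le; [apply means_nonneg_subtree; lia|]. intro N1.
      rewrite cfg_sum_app.
      apply Rle_trans with
        (cfg_sum mu K (fun N2 => exp (-3) * eA N2 * eB N2) (subtree i (2 * j + 1)) N1).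
      * apply cfg_sum_le; [apply means_nonneg_subtree; lia|]. intro N2.
        now apply root_exp_moment_le.
      * rewrite (cfg_sum_scal _ _ (fun N2 => exp (-3) * eA N2) eB).
        -- replace (exp (-3) * (3 / 2) * eA N1) with (exp (-3) * eA N1 * (3 / 2)) by ring.
           apply Rmult_le_compat_l; [left; apply Rmult_lt_0_compat; apply exp_pos | apply Hchild].
        -- intros a b k N2 Hin. unfold eA. rewrite demand_update; [reflexivity|].
           intro Hin'. exact (subtree_children_disjoint i j a b Hin' Hin).
    + rewrite (cfg_sum_scal _ _ (fun _ => exp (-3) * (3 / 2)) eA) by reflexivity.
      assert (H3 : exp (-3) <= 1 / 8).
      { replace (-3) with (- INR 3) by (simpl; ring).
        eapply Rle_trans; [apply exp_neg_nat_le | simpl; lra]. }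
      pose proof (Hchild (2 * j)%nat N) as HA. fold eA in HA. pose proof (exp_pos (-3)). nra.
Qed.

Lemma demand_tail_le i j t N : (i <= I)%nat -> 0 <= t ->
  cfg_sum mu K (fun N => if Rle_dec t (INR (demand N i j)) then 1 else 0) (subtree i j) N
  <= exp (- t).
Proof.
  intros Hi Ht. pose proof (means_nonneg_subtree i j Hi) as Hmu.
  destruct Ht as [Ht | <-].
  - eapply Rle_trans.
    + apply cfg_sum_le with
        (G := fun N => 2 * exp (- t) * (exp (INR (demand N i j)) - 1)); [exact Hmu|].
      intro N'. now apply indicator_le_exp_moment.
    + rewrite cfg_sum_scal by reflexivity.
      pose proof (demand_exp_moment_le i Hi j N). pose proof (exp_pos (- t)). nra.
  - rewrite Ropp_0, exp_0.
    eapply Rle_trans; [|apply (cfg_sum_const_le mu K 1 _ N Hmu); lra].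
    apply cfg_sum_le; [exact Hmu|]. intro N'. destruct Rle_dec; lra.
Qed.

End DemandMoment.

Lemma ln2_pos : 0 < ln 2.
Proof. rewrite <- ln_1. apply ln_increasing; lra. Qed.

Lemma INR_pow2 m : INR (Nat.pow 2 m) = exp (INR m * ln 2).
Proof. rewrite <- exp_pow, exp_ln, pow_INR by lra. reflexivity. Qed.

Lemma admissible_level_lt nu n a : (Z.of_nat a <= imax nu n)%Z ->
  INR a < 9 / 10 * (Rad nu n / (2 * ln 2)) + 1.
Proof.
  unfold imax, Rceil. intro Ha. apply IZR_le in Ha.
  rewrite <- INR_IZR_INZ, opp_IZR in Ha.
  destruct (base_Int_part (- (9 / 10 * Rad nu n / (2 * ln 2)))) as [_ Hfloor].
  unfold Rdiv in *. lra.
Qed.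

(* With x = R / (2 ln 2), the exponent 4 - i + floor x of n_i exceeds 2 + x / 10 on
   admissible levels, so Z.to_nat does not truncate it. *)
Lemma ntiles_le nu n a : 0 < nu < INR n ->
  INR a < 9 / 10 * (Rad nu n / (2 * ln 2)) + 1 ->
  INR (ntiles nu n a) <= 16 * exp (- INR a * ln 2) * (INR n / nu).
Proof.
  intros Hnu Ha. pose proof ln2_pos as HL.
  set (x := Rad nu n / (2 * ln 2)) in *.
  assert (Hq : 1 < INR n / nu)
    by (apply Rmult_lt_reg_r with nu; [lra | unfold Rdiv; rewrite Rmult_assoc, Rinv_l; lra]).
  assert (HxL : x * ln 2 = ln (INR n / nu)) by (unfold x, Rad; field; lra).
  assert (Hx : 0 < x).
  { apply Rmult_lt_reg_r with (ln 2); [exact HL|]. rewrite HxL, Rmult_0_l, <- ln_1.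
    apply ln_increasing; lra. }
  destruct (base_Int_part x) as [Hfl1 Hfl2].
  set (e := (4 - Z.of_nat a + Rfloor x)%Z).
  assert (He : IZR e = 4 - INR a + IZR (Int_part x)).
  { unfold e, Rfloor. now rewrite plus_IZR, minus_IZR, <- INR_IZR_INZ. }
  assert (He0 : (0 <= e)%Z) by (apply le_IZR; lra).
  unfold ntiles. fold x. fold e.
  rewrite INR_pow2, INR_IZR_INZ, Z2Nat.id by exact He0.
  replace (16 * exp (- INR a * ln 2) * (INR n / nu))
    with (exp ((4 - INR a + x) * ln 2)).
  - apply exp_le, Rmult_le_compat_r; lra.
  - rewrite Rmult_plus_distr_r, exp_plus, HxL, exp_ln by lra.
    replace ((4 - INR a) * ln 2) with (INR 4 * ln 2 + - INR a * ln 2) by (simpl; ring).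
    rewrite exp_plus, <- INR_pow2. simpl. ring.
Qed.

Lemma cosh_sub_ge y d : ln 2 <= y -> 0 <= d ->
  (exp (y + d) - exp y) / 4 <= cosh (y + d) - cosh y.
Proof.
  intros Hy Hd. unfold cosh. rewrite !exp_Ropp.
  assert (Hu : 2 <= exp y) by (rewrite <- (exp_ln 2) by lra; now apply exp_le).
  assert (Huv : exp y <= exp (y + d)) by (apply exp_le; lra).
  set (u := exp y) in *. set (v := exp (y + d)) in *.
  assert (Hinv : / u - / v = (v - u) * / (u * v)) by (field; lra).
  assert (/ (u * v) <= / 4) by (apply Rinv_le_contravar; nra).
  assert ((v - u) * / (u * v) <= (v - u) * / 4) by (apply Rmult_le_compat_l; lra).
  lra.
Qed.

Lemma cosh_sub1_le y : 0 < y -> 0 < cosh y - 1 <= exp y / 2.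
Proof.
  intro Hy. unfold cosh. rewrite exp_Ropp.
  assert (H1 : 1 < exp y) by (rewrite <- exp_0; now apply exp_increasing).
  assert (Hinv : exp y * / exp y = 1) by (field; lra).
  assert (0 < / exp y) by (apply Rinv_0_lt_compat; lra).
  split; nra.
Qed.

Lemma mean_ratio_ge n nu Nt D E C z w rho :
  0 < n -> 0 < nu -> 0 < Nt -> Nt <= 16 * z * (n / nu) -> 0 < D -> D <= E / 2 ->
  0 <= z <= w -> rho <= 1 -> E * w * (1 - rho) / 4 <= C ->
  nu * (1 - rho) / 32 <= n * C / (Nt * D).
Proof.
  intros Hn Hnu HNt HNtle HD HDle Hzw Hrho HC.
  apply Rmult_le_reg_r with (Nt * D); [nra|].
  unfold Rdiv at 2. rewrite Rmult_assoc, Rinv_l, Rmult_1_r by nra.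
  assert (HNtD : Nt * D <= 16 * z * (n / nu) * (E / 2)) by (apply Rmult_le_compat; lra).
  assert (Hcancel : nu * (n / nu) = n) by (field; lra).
  apply Rle_trans with (nu * (1 - rho) / 32 * (16 * z * (n / nu) * (E / 2))).
  - apply Rmult_le_compat_l; [nra | exact HNtD].
  - replace (nu * (1 - rho) / 32 * (16 * z * (n / nu) * (E / 2)))
      with (n * (E * z * (1 - rho) / 4)) by (rewrite <- Hcancel; field; lra).
    apply Rmult_le_compat_l; [lra|]. eapply Rle_trans; [|exact HC].
    apply Rmult_le_compat_r; [lra|]. apply Rmult_le_compat_r; [lra|].
    apply Rmult_le_compat_l; lra.
Qed.

Lemma level_param_gt alpha nu n : 0 < alpha -> 0 < nu ->
  nu * exp ((20 + 5 / alpha) * ln 2) < INR n -> 20 + 5 / alpha < Rad nu n / (2 * ln 2).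
Proof.
  intros Halpha Hnu Hn. pose proof ln2_pos as HL.
  apply Rmult_lt_reg_r with (ln 2); [exact HL|].
  replace (Rad nu n / (2 * ln 2) * ln 2) with (ln (INR n / nu)) by (unfold Rad; field; lra).
  rewrite <- (ln_exp ((20 + 5 / alpha) * ln 2)).
  apply ln_increasing; [apply exp_pos|].
  apply Rmult_lt_reg_r with nu; [exact Hnu|].
  unfold Rdiv; rewrite Rmult_assoc, Rinv_l; lra.
Qed.

Lemma inner_radius_ge alpha x a : 0 < alpha -> 20 + 5 / alpha < x ->
  INR a < 9 / 10 * x + 1 -> ln 2 / alpha <= 2 * x * ln 2 - 2 * (INR a + 1) * ln 2.
Proof.
  intros Halpha Hx Ha. pose proof ln2_pos as HL.
  replace (ln 2 / alpha) with (5 / alpha * ln 2 / 5) by (field; lra).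
  set (q := 5 / alpha) in *.
  assert (0 < (x - 20 - q) * ln 2) by (apply Rmult_lt_0_compat; lra).
  assert (0 < (9 / 10 * x + 1 - INR a) * ln 2) by (apply Rmult_lt_0_compat; lra).
  lra.
Qed.

Lemma cosh_annulus_ge alpha r d : ln 2 <= alpha * r -> 0 <= alpha * d ->
  exp (alpha * (r + d)) * (1 - exp (- (alpha * d))) / 4 <=
  cosh (alpha * (r + d)) - cosh (alpha * r).
Proof.
  intros Hr Hd. rewrite Rmult_plus_distr_l.
  eapply Rle_trans; [|apply cosh_sub_ge; assumption].
  apply Req_le. rewrite Rmult_minus_distr_l, Rmult_1_r, <- exp_plus.
  f_equal. do 2 f_equal. ring.
Qed.

Lemma tile_mean_ge alpha nu n a : 0 < alpha < 1 / 2 -> 0 < nu ->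
  nu * exp ((20 + 5 / alpha) * ln 2) < INR n -> (Z.of_nat a <= imax nu n)%Z ->
  nu * (1 - exp (- (2 * alpha * ln 2))) / 32 <= tile_mean alpha nu n a.
Proof.
  intros Halpha Hnu Hn Ha. pose proof ln2_pos as HL.
  apply admissible_level_lt in Ha.
  pose proof (level_param_gt alpha nu n (proj1 Halpha) Hnu Hn) as Hx.
  assert (H5 : 0 < 5 / alpha) by (apply Rdiv_lt_0_compat; lra).
  assert (Hnun : nu < INR n).
  { assert (1 < exp ((20 + 5 / alpha) * ln 2)) by (rewrite <- exp_0; apply exp_increasing; nra).
    nra. }
  set (x := Rad nu n / (2 * ln 2)) in *.
  assert (HR : Rad nu n = 2 * x * ln 2) by (unfold x; field; lra).
  assert (HalphaR : 0 < alpha * Rad nu n).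
  { rewrite HR. apply Rmult_lt_0_compat; [lra|]. apply Rmult_lt_0_compat; lra. }
  set (r1 := Rad nu n - 2 * (INR a + 1) * ln 2).
  assert (Hr1 : ln 2 / alpha <= r1)
    by (unfold r1; rewrite HR; apply inner_radius_ge; lra).
  assert (Hr1pos : 0 < r1) by (pose proof (Rdiv_lt_0_compat _ _ HL (proj1 Halpha)); lra).
  unfold tile_mean; cbv zeta.
  replace (Rad nu n - 2 * INR a * ln 2) with (r1 + 2 * ln 2) by (unfold r1; ring).
  fold r1. rewrite Rmax_right, (Rmax_right 0 r1) by lra.
  apply mean_ratio_ge with (E := exp (alpha * Rad nu n)) (z := exp (- INR a * ln 2))
    (w := exp (- (2 * alpha * INR a * ln 2))).
  - lra.
  - exact Hnu.
  - apply lt_0_INR, Nat.neq_0_lt_0, Nat.pow_nonzero. lia.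
  - apply ntiles_le; [lra | exact Ha].
  - apply cosh_sub1_le. exact HalphaR.
  - apply cosh_sub1_le. exact HalphaR.
  - split; [left; apply exp_pos | apply exp_le].
    assert (0 <= INR a * ln 2) by (apply Rmult_le_pos; [apply pos_INR | lra]). nra.
  - rewrite <- exp_0. apply exp_le. nra.
  - eapply Rle_trans; [|apply cosh_annulus_ge].
    + rewrite <- exp_plus. apply Req_le.
      replace (alpha * (r1 + 2 * ln 2)) with (alpha * Rad nu n + - (2 * alpha * INR a * ln 2))
        by (unfold r1; ring).
      now replace (alpha * (2 * ln 2)) with (2 * alpha * ln 2) by ring.
    + replace (ln 2) with (alpha * (ln 2 / alpha)) at 1 by (field; lra).
      apply Rmult_le_compat_l; lra.
    + nra.
Qed.

Theorem mainTheorem12 :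
  exists c : R, 0 < c /\
  forall alpha : R, 0 < alpha < 1 / 2 ->
  exists nustar : R,
  forall nu : R, nustar < nu -> 0 < nu ->
  exists n0 : nat,
  forall n : nat, (n0 <= n)%nat -> nu < INR n ->
  forall i j : nat, admissible nu n i j ->
  forall t : R, 0 <= t ->
  prob_demand_ge_le alpha nu n i j t (exp (- c * t)).
Proof.
  exists 1. split; [lra|]. intros alpha Halpha.
  set (rho := exp (- (2 * alpha * ln 2))).
  assert (Hrho : rho < 1)
    by (unfold rho; rewrite <- exp_0; apply exp_increasing; pose proof ln2_pos; nra).
  exists (384 / (1 - rho)). intros nu Hnu Hnu0.
  set (y := nu * exp ((20 + 5 / alpha) * ln 2)).
  exists (Z.to_nat (up y)). intros n Hn _ i j [Hi _] t Ht K.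
  assert (Hyn : y < INR n).
  { destruct (archimed y) as [Hup _].
    assert (Hy : 0 < y) by (apply Rmult_lt_0_compat; [lra | apply exp_pos]).
    apply le_INR in Hn. rewrite INR_IZR_INZ, Z2Nat.id in Hn by (apply le_IZR; lra). lra. }
  unfold prob_trunc. replace (- (1) * t) with (- t) by ring.
  apply demand_tail_le with (I := i); [|lia | exact Ht].
  intros a b Ha.
  apply Rle_trans with (nu * (1 - rho) / 32).
  - apply Rmult_lt_compat_r with (r := 1 - rho) in Hnu; [|lra].
    unfold Rdiv in Hnu. rewrite Rmult_assoc, Rinv_l, Rmult_1_r in Hnu; lra.
  - apply tile_mean_ge; [exact Halpha | exact Hnu0 | exact Hyn | lia].
Qed.
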